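(* Let $\alpha$ be a unit speed Frenet curve in $\mathbb{E}^3$ with curvature $\kappa$, let $\beta$ be an osculating mate of $\alpha$, and let $\theta(s)=\int\kappa(s)ds$ be the antiderivative of $\kappa$ with $\beta'=\sin\theta\,T+\cos\theta\,N$. Then $\beta$ is a rectifying curve if and only if $\tan\theta(s)$ is a linear function of $s$, i.e. $\tan\theta(s)=a_1s+a_2$ for real constants $a_1\neq0$, $a_2$.
   Context: $\alpha:I\to\mathbb{E}^3$ is parametrized by arclength $s$, with Frenet frame $\{T,N,B\}$, curvature $\kappa>0$, torsion $\tau$. An osculating mate of $\alpha$ is a curve $\beta(s)=\int(x_1T+x_2N)ds$ with smooth $x_1,x_2$, $x_1^2+x_2^2=1$ and $\beta''\perp\mathrm{span}\{T,N\}$; $\beta$ is assumed to be a Frenet curve, unit speed in $s$, with Frenet frame $\{\bar T,\bar N,\bar B\}$. Being given by an indefinite integral, $\beta$ is determined up to a translation, and ''$\beta$ is rectifying'' is understood for a suitable choice of this integration constant. A Frenet curve is rectifying if its position vector always lies in its rectifying plane $\mathrm{span}\{\bar T,\bar B\}$; for a unit speed curve with curvature $\bar\kappa$ and torsion $\bar\tau$ this is characterized (up to translation) by $\bar\tau/\bar\kappa=\frac1c(s+b)$ for real constants $c\neq0$, $b$. *)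

From HB Require Import structures.
From mathcomp Require Import all_boot all_order all_algebra.
From mathcomp Require Import all_classical all_reals all_analysis.
Set Implicit Arguments. Unset Strict Implicit. Unset Printing Implicit Defensive.
Import Order.TTheory GRing.Theory Num.Theory.
Import numFieldNormedType.Exports.
Local Open Scope classical_set_scope.
Local Open Scope ring_scope.

Section E3.
Variable R : realType.
Notation V := 'rV[R]_3.

Definition dotp (u v : V) : R := \sum_(i < 3) u 0 i * v 0 i.
Definition enorm (u : V) : R := Num.sqrt (dotp u u).
Definition crossp (u v : V) : V :=
  let c (w : V) (k : nat) := w 0 (inord k) in
  \row_(k < 3) match val k with
               | 0 => c u 1 * c v 2 - c u 2 * c v 1
               | 1 => c u 2 * c v 0 - c u 0 * c v 2
               | _ => c u 0 * c v 1 - c u 1 * c v 0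
               end.

Definition frenetT (g : R -> V) (s : R) : V := derive1 g s.
Definition frenetN (g : R -> V) (s : R) : V :=
  (enorm (derive1 (derive1 g) s))^-1 *: derive1 (derive1 g) s.
Definition frenetB (g : R -> V) (s : R) : V :=
  crossp (frenetT g s) (frenetN g s).

Definition rectifying_on (I : set R) (g : R -> V) : Prop :=
  forall s, I s -> exists l m : R, g s = l *: frenetT g s + m *: frenetB g s.

End E3.

From HB Require Import structures.
From mathcomp Require Import all_boot all_order all_algebra.
From mathcomp Require Import all_classical all_reals all_analysis.
From mathcomp Require Import ring.
Set Implicit Arguments. Unset Strict Implicit. Unset Printing Implicit Defensive.
Import Order.TTheory GRing.Theory Num.Theory.
Import numFieldNormedType.Exports.
Local Open Scope classical_set_scope.
Local Open Scope ring_scope.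

(* Differentiating beta' = sin(theta) T + cos(theta) N with theta' = kappa
   gives beta'' = tau cos(theta) B, so beta'' is parallel to B: the tangent of
   beta lies in span{T, N} and its binormal is the unit vector
   cos(theta) T - sin(theta) N of that plane.  Hence the rectifying plane of
   beta is span{T, N}, and a translate p of beta is rectifying iff p.B = 0.
   Differentiating p.B = 0 twice gives p.N = 0 and kappa (p.T) = cos(theta),
   while (p.T)' = sin(theta); so cos(theta) (p.T) is a constant C, i.e.
   kappa = cos(theta)^2 / C, which says (tan theta)' = 1/C.  Conversely, if
   (tan theta)' = a1 then p := beta - (a1 cos theta)^-1 T is constant, and the
   translate beta - p = (a1 cos theta)^-1 T is orthogonal to B. *)

Section VectorAlgebra.
Context {R : realType}.
Implicit Types u v w : 'rV[R]_3.

Lemma ord3P (i : 'I_3) : [\/ i = inord 0, i = inord 1 | i = inord 2].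
Proof.
case: i => [[|[|[|k]]] lt_i3] //;
  [constructor 1 | constructor 2 | constructor 3];
  by apply/val_inj; rewrite /= inordK.
Qed.

Lemma eq_row3 u v :
    u 0 (inord 0) = v 0 (inord 0) -> u 0 (inord 1) = v 0 (inord 1) ->
    u 0 (inord 2) = v 0 (inord 2) ->
  u = v.
Proof. by move=> e0 e1 e2; apply/rowP => i; case: (ord3P i) => ->. Qed.

Lemma sum_ord3 (F : 'I_3 -> R) :
  \sum_(i < 3) F i = F (inord 0) + F (inord 1) + F (inord 2).
Proof.
rewrite !big_ord_recl big_ord0 addr0 addrA.
by congr (_ + _ + _); congr F; apply/val_inj; rewrite /= inordK.
Qed.

Lemma dotpE u v : dotp u v =
  u 0 (inord 0) * v 0 (inord 0) + u 0 (inord 1) * v 0 (inord 1)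
  + u 0 (inord 2) * v 0 (inord 2).
Proof. by rewrite /dotp sum_ord3. Qed.

Lemma val_inord3 k : (k < 3)%N -> \val (inord k : 'I_3) = k.
Proof. exact: inordK. Qed.

Lemma crosspE0 u v : crossp u v 0 (inord 0) =
  u 0 (inord 1) * v 0 (inord 2) - u 0 (inord 2) * v 0 (inord 1).
Proof. by rewrite /crossp mxE val_inord3. Qed.

Lemma crosspE1 u v : crossp u v 0 (inord 1) =
  u 0 (inord 2) * v 0 (inord 0) - u 0 (inord 0) * v 0 (inord 2).
Proof. by rewrite /crossp mxE val_inord3. Qed.

Lemma crosspE2 u v : crossp u v 0 (inord 2) =
  u 0 (inord 0) * v 0 (inord 1) - u 0 (inord 1) * v 0 (inord 0).
Proof. by rewrite /crossp mxE val_inord3. Qed.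

Ltac coord_ring :=
  rewrite ?dotpE ?(crosspE0, crosspE1, crosspE2) ?(crosspE0, crosspE1, crosspE2)
          ?mxE ?val_inord3 //; ring.

Lemma dotpC u v : dotp u v = dotp v u. Proof. coord_ring. Qed.
Lemma dotpDl u v w : dotp (u + v) w = dotp u w + dotp v w. Proof. coord_ring. Qed.
Lemma dotpDr u v w : dotp u (v + w) = dotp u v + dotp u w. Proof. coord_ring. Qed.
Lemma dotpBl u v w : dotp (u - v) w = dotp u w - dotp v w. Proof. coord_ring. Qed.
Lemma dotpZl k u v : dotp (k *: u) v = k * dotp u v. Proof. coord_ring. Qed.
Lemma dotpZr k u v : dotp u (k *: v) = k * dotp u v. Proof. coord_ring. Qed.
Lemma dotp_crossl u v : dotp u (crossp u v) = 0. Proof. coord_ring. Qed.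
Lemma dotp_crossr u v : dotp v (crossp u v) = 0. Proof. coord_ring. Qed.

Lemma dotp_crossp_self u v :
  dotp (crossp u v) (crossp u v) = dotp u u * dotp v v - dotp u v ^+ 2.
Proof. coord_ring. Qed.

Lemma crossp0r u : crossp u 0 = 0.
Proof. apply: eq_row3; coord_ring. Qed.

Lemma crosspZr k u v : crossp u (k *: v) = k *: crossp u v.
Proof. apply: eq_row3; coord_ring. Qed.

Lemma crossp_cross u v w : crossp u (crossp v w) = dotp u w *: v - dotp u v *: w.
Proof. apply: eq_row3; coord_ring. Qed.

End VectorAlgebra.

Section OrthonormalPair.
Context {R : realType}.
Variables (t n : 'rV[R]_3).
Hypotheses (t_unit : dotp t t = 1) (n_unit : dotp n n = 1) (tn0 : dotp t n = 0).

Lemma dotp_crossp_unit : dotp (crossp t n) (crossp t n) = 1.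
Proof. by rewrite dotp_crossp_self t_unit n_unit tn0 expr0n /= subr0 mulr1. Qed.

Lemma orthogonal_parallel_crossp v : dotp v t = 0 -> dotp v n = 0 ->
  v = dotp v (crossp t n) *: crossp t n.
Proof.
move=> vt0 vn0.
have vxb0 : crossp v (crossp t n) = 0.
  by rewrite crossp_cross vt0 vn0 !scale0r subr0.
have := crossp_cross (crossp t n) v (crossp t n).
rewrite vxb0 crossp0r dotp_crossp_unit scale1r => /eqP.
by rewrite eq_sym subr_eq0 dotpC => /eqP.
Qed.

Lemma crossp_plane_crossp a b :
  crossp (a *: t + b *: n) (crossp t n) = b *: t - a *: n.
Proof.
rewrite crossp_cross !dotpDl !dotpZl t_unit n_unit tn0 dotpC tn0.
by rewrite !mulr0 !mulr1 addr0 add0r.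
Qed.

End OrthonormalPair.

Section RealCalculus.
Context {R : realType}.

Lemma is_derive1 (V : normedModType R) (f : R -> V) (s : R) (df : V) :
  derivable f s 1 -> derive1 f s = df -> is_derive s 1 f df.
Proof. by move=> fd <-; rewrite derive1E; exact: derivableP. Qed.

Lemma is_derive_coord m n (f : R -> 'M[R]_(m, n)) (s : R) df
    (i : 'I_m) (j : 'I_n) :
  is_derive s 1 f df -> is_derive s 1 (fun t => f t i j) (df i j).
Proof.
move=> [fd <-].
pose rate h := h^-1 *: (((fun t => f t i j) \o shift s) (h *: 1) - f s i j).
have rateE : rate = (fun M : 'M[R]_(m, n) => M i j)
    \o (fun h : R => h^-1 *: ((f \o shift s) (h *: 1) - f s)).
  by apply/funext => h /=; rewrite !mxE.
have rate_cvg : rate @ 0^' --> ('D_1 f s) i j.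
  rewrite rateE /derive; apply: continuous_cvg; first exact: coord_continuous.
  exact: fd.
apply: DeriveDef; first by apply/cvg_ex; eexists; exact: rate_cvg.
by rewrite /derive; exact: cvg_lim rate_cvg.
Qed.

Lemma is_derive_dotp (f g : R -> 'rV[R]_3) (s : R) (df dg : 'rV[R]_3) :
  is_derive s 1 f df -> is_derive s 1 g dg ->
  is_derive s 1 (fun t => dotp (f t) (g t)) (dotp df (g s) + dotp (f s) dg).
Proof.
move=> fd gd.
have coordM k := is_deriveM (is_derive_coord 0 (inord k) fd)
                            (is_derive_coord 0 (inord k) gd).
have sumM := is_deriveD (is_deriveD (coordM 0%N) (coordM 1%N)) (coordM 2%N).
rewrite (_ : (fun t => dotp (f t) (g t)) = (fun t =>
    f t 0 (inord 0) * g t 0 (inord 0) + f t 0 (inord 1) * g t 0 (inord 1)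
    + f t 0 (inord 2) * g t 0 (inord 2))).
  2: by apply/funext => t; rewrite dotpE.
apply: is_derive_eq sumM _.
by rewrite !dotpE -![_ *: _]/(_ * _); ring.
Qed.

Lemma derive1_addr_cst (V : normedModType R) (f : R -> V) c :
  derive1 (fun t => f t + c) = derive1 f.
Proof.
apply/funext => s; rewrite /derive1.
have -> : (fun h : R => h^-1 *: (f (h + s) + c - (f s + c)))
    = (fun h => h^-1 *: (f (h + s) - f s)).
  by apply/funext => h; rewrite opprD addrACA subrr addr0.
by [].
Qed.

Lemma is_derive_eq_on (V : normedModType R) (I : set R) (phi psi : R -> V)
    (s : R) (d e : V) :
  open I -> I s -> (forall t, I t -> phi t = psi t) ->
  is_derive s 1 phi d -> is_derive s 1 psi e -> d = e.
Proof.
move=> oI Is phi_psi [_ <-] [_ <-]; apply: near_eq_derive.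
have : nbhs s I by apply: open_nbhs_nbhs; split.
by apply: filterS => t /phi_psi.
Qed.

Lemma is_derive_on_zero (I : set R) (phi : R -> R) (s d : R) :
  open I -> I s -> (forall t, I t -> phi t = 0) -> is_derive s 1 phi d -> d = 0.
Proof.
by move=> oI Is phi0 /(is_derive_eq_on oI Is phi0); apply; exact: is_derive_cst.
Qed.

Lemma is_derive0_cst_on (I : set R) (phi : R -> R) :
  is_interval I -> (forall t, I t -> is_derive t 1 phi 0) ->
  forall x y, I x -> I y -> phi x = phi y.
Proof.
move=> iI phi'0 x y Ix Iy.
wlog le_xy : x y Ix Iy / x <= y.
  move=> cst; case: (leP x y) => [|/ltW] xy; first exact: cst.
  by symmetry; exact: cst.
have Ixy z : x <= z <= y -> I z by apply: iI.
have phi'0_in z : z \in `]x, y[ -> is_derive z 1 phi ((fun=> 0) z).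
  by rewrite in_itv /= => /andP[xz zy]; apply: phi'0; apply: Ixy; rewrite !ltW.
have phi_cont : {within `[x, y], continuous phi}.
  apply: derivable_within_continuous => z; rewrite in_itv /= => xzy.
  by apply: (@ex_derive _ _ _ _ _ _ 0); apply: phi'0; apply: Ixy.
have [c _] := MVT_segment le_xy phi'0_in phi_cont.
by rewrite mul0r => /eqP; rewrite subr_eq0 => /eqP ->.
Qed.

End RealCalculus.

Section OsculatingMate.
Context {R : realType}.
Variables (I : set R) (T N B beta : R -> 'rV[R]_3) (kappa tau theta : R -> R).
Hypothesis I_open : open I.
Hypothesis I_interval : is_interval I.
Hypothesis frame_orthonormal : forall s, I s ->
  [/\ dotp (T s) (T s) = 1, dotp (N s) (N s) = 1, dotp (T s) (N s) = 0
    & B s = crossp (T s) (N s)].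
Hypothesis T'_frenet : forall s, I s -> is_derive s 1 T (kappa s *: N s).
Hypothesis N'_frenet : forall s, I s ->
  is_derive s 1 N (- kappa s *: T s + tau s *: B s).
Hypothesis B'_frenet : forall s, I s -> is_derive s 1 B (- tau s *: N s).
Hypothesis theta'_kappa : forall s, I s -> is_derive s 1 theta (kappa s).
Hypothesis beta_derivable : forall s, I s -> derivable beta s 1.
Hypothesis beta'_angle : forall s, I s ->
  derive1 beta s = sin (theta s) *: T s + cos (theta s) *: N s.
Hypothesis beta'_derivable : forall s, I s -> derivable (derive1 beta) s 1.
Hypothesis beta''_osculating : forall s, I s ->
  dotp (derive1 (derive1 beta) s) (T s) = 0 /\
  dotp (derive1 (derive1 beta) s) (N s) = 0.
Hypothesis beta''_neq0 : forall s, I s -> derive1 (derive1 beta) s != 0.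

Lemma dotp_frame_B s : I s ->
  [/\ dotp (T s) (B s) = 0, dotp (N s) (B s) = 0 & dotp (B s) (B s) = 1].
Proof.
move=> /frame_orthonormal[tt nn tn ->].
by rewrite dotp_crossl dotp_crossr (dotp_crossp_unit tt nn tn).
Qed.

Lemma dotp_beta' s : I s ->
  [/\ dotp (derive1 beta s) (T s) = sin (theta s),
      dotp (derive1 beta s) (N s) = cos (theta s)
    & dotp (derive1 beta s) (B s) = 0].
Proof.
move=> Is; have [tt nn tn _] := frame_orthonormal Is.
have [tb nb _] := dotp_frame_B Is.
rewrite beta'_angle // !dotpDl !dotpZl tt nn tb nb (dotpC (N s)) tn.
by rewrite !mulr0 !mulr1 !addr0 !add0r.
Qed.

Lemma beta''_binormal s : I s ->
  derive1 (derive1 beta) s = (tau s * cos (theta s)) *: B s.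
Proof.
move=> Is; have [tt nn tn Bs] := frame_orthonormal Is.
have [b''T b''N] := beta''_osculating Is.
have b'B0 t : I t -> dotp (derive1 beta t) (B t) = 0 by case/dotp_beta'.
have := is_derive_on_zero I_open Is b'B0
  (is_derive_dotp (is_derive1 (beta'_derivable Is) erefl) (B'_frenet Is)).
have [_ b'N _] := dotp_beta' Is.
rewrite dotpZr b'N mulNr => /eqP; rewrite addr_eq0 opprK => /eqP <-.
rewrite Bs; exact: orthogonal_parallel_crossp.
Qed.

Lemma tau_cos_neq0 s : I s -> tau s * cos (theta s) != 0.
Proof.
move=> Is; move: (beta''_neq0 Is); rewrite beta''_binormal //.
by apply: contra_neq => ->; rewrite scale0r.
Qed.

Lemma tau_neq0 s : I s -> tau s != 0.
Proof. by move=> /tau_cos_neq0; rewrite mulf_eq0 negb_or => /andP[]. Qed.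

Lemma cos_theta_neq0 s : I s -> cos (theta s) != 0.
Proof. by move=> /tau_cos_neq0; rewrite mulf_eq0 negb_or => /andP[]. Qed.

Lemma is_derive_cos_theta s : I s ->
  is_derive s 1 (fun t => cos (theta t)) (- sin (theta s) * kappa s).
Proof.
by move=> Is; exact: is_derive1_comp (is_derive_cos _) (theta'_kappa Is).
Qed.

Lemma is_derive_tan_theta s : I s ->
  is_derive s 1 (fun t => tan (theta t)) (cos (theta s) ^- 2 * kappa s).
Proof.
move=> Is.
exact: is_derive1_comp (is_derive_tan (cos_theta_neq0 Is)) (theta'_kappa Is).
Qed.

Lemma is_derive_translate c s : I s ->
  is_derive s 1 (fun t => beta t + c) (derive1 beta s).
Proof.
move=> Is; rewrite -[derive1 beta s]addr0.
exact: is_deriveD (is_derive1 (beta_derivable Is) erefl) (is_derive_cst c s 1).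
Qed.

Lemma frenet_translate c s : I s ->
  frenetT (fun t => beta t + c) s = derive1 beta s /\
  exists2 nu : R, nu != 0 & frenetB (fun t => beta t + c) s =
                        nu *: (cos (theta s) *: T s - sin (theta s) *: N s).
Proof.
move=> Is; have [tt nn tn Bs] := frame_orthonormal Is.
have [_ _ BB] := dotp_frame_B Is.
rewrite /frenetB /frenetN /frenetT !derive1_addr_cst; split => //.
have mu0 := tau_cos_neq0 Is.
have e_neq0 : enorm (derive1 (derive1 beta) s) != 0.
  rewrite /enorm sqrtr_eq0 -ltNge beta''_binormal // dotpZl dotpZr BB mulr1.
  by rewrite -expr2 exprn_even_gt0.
exists ((enorm (derive1 (derive1 beta) s))^-1 * (tau s * cos (theta s))).
  by rewrite mulf_neq0 // invr_neq0.
rewrite [in X in crossp _ (_ *: X)]beta''_binormal // scalerA crosspZr.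
by rewrite beta'_angle // Bs (crossp_plane_crossp tt nn tn).
Qed.

Section RectifyingTranslate.
Variable c : 'rV[R]_3.
Hypothesis rectifying : rectifying_on I (fun t => beta t + c).

Lemma rectifying_dotp_B s : I s -> dotp (beta s + c) (B s) = 0.
Proof.
move=> Is; have [l [m /= ->]] := rectifying Is.
have [-> [nu _ ->]] := frenet_translate c Is.
have [_ _ b'B] := dotp_beta' Is; have [tb nb _] := dotp_frame_B Is.
rewrite dotpDl !dotpZl dotpBl !dotpZl b'B tb nb; ring.
Qed.

Lemma rectifying_dotp_N s : I s -> dotp (beta s + c) (N s) = 0.
Proof.
move=> Is; have := is_derive_on_zero I_open Is rectifying_dotp_B
  (is_derive_dotp (is_derive_translate c Is) (B'_frenet Is)).
have [_ _ ->] := dotp_beta' Is.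
rewrite add0r dotpZr => /eqP; rewrite mulf_eq0 oppr_eq0 (negbTE (tau_neq0 Is)).
by move=> /eqP.
Qed.

Lemma kappa_dotp_T s : I s -> kappa s * dotp (beta s + c) (T s) = cos (theta s).
Proof.
move=> Is; have := is_derive_on_zero I_open Is rectifying_dotp_N
  (is_derive_dotp (is_derive_translate c Is) (N'_frenet Is)).
have [_ -> _] := dotp_beta' Is.
rewrite dotpDr !dotpZr rectifying_dotp_B // mulr0 addr0 mulNr => /eqP.
by rewrite subr_eq0 => /eqP <-.
Qed.

Lemma is_derive_dotp_T s : I s ->
  is_derive s 1 (fun t => dotp (beta t + c) (T t)) (sin (theta s)).
Proof.
move=> Is.
apply: is_derive_eq (is_derive_dotp (is_derive_translate c Is) (T'_frenet Is)) _.
have [-> _ _] := dotp_beta' Is.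
by rewrite dotpZr rectifying_dotp_N // mulr0 addr0.
Qed.

Lemma cos_dotp_T_cst x y : I x -> I y ->
  cos (theta x) * dotp (beta x + c) (T x) =
  cos (theta y) * dotp (beta y + c) (T y).
Proof.
move=> Ix Iy; apply: (is_derive0_cst_on
  (phi := fun t => cos (theta t) * dotp (beta t + c) (T t)) I_interval _ Ix Iy).
move=> s Is.
apply: is_derive_eq (is_deriveM (is_derive_cos_theta Is) (is_derive_dotp_T Is)) _.
by rewrite -![_ *: _]/(_ * _) -(kappa_dotp_T Is); ring.
Qed.

Lemma rectifying_tan_linear s0 : I s0 ->
  exists a1 a2 : R, a1 != 0 /\ forall s, I s -> tan (theta s) = a1 * s + a2.
Proof.
move=> Is0; set C := cos (theta s0) * dotp (beta s0 + c) (T s0).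
have kappaC s : I s -> kappa s * C = cos (theta s) ^+ 2.
  by move=> Is; rewrite /C -(cos_dotp_T_cst Is Is0) -(kappa_dotp_T Is); ring.
have C_neq0 : C != 0.
  apply: contraNneq (cos_theta_neq0 Is0) => C0.
  by rewrite -sqrf_eq0 -kappaC // C0 mulr0.
have tan_sub'0 t : I t -> is_derive t 1 (fun t => tan (theta t) - C^-1 * t) 0.
  move=> It; apply: is_derive_eq
    (is_deriveB (is_derive_tan_theta It) (is_deriveZ C^-1 (is_derive_id t 1))) _.
  rewrite -![_ *: _]/(_ * _) mulr1 -[kappa t](mulfK C_neq0) kappaC //.
  by rewrite mulrA mulVf ?mul1r ?subrr // expf_neq0 // cos_theta_neq0.
exists C^-1, (tan (theta s0) - C^-1 * s0); split; first by rewrite invr_eq0.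
move=> s Is; have /= <- := is_derive0_cst_on I_interval tan_sub'0 Is Is0.
ring.
Qed.

End RectifyingTranslate.

Section TanLinear.
Variables a1 a2 : R.
Hypothesis a1_neq0 : a1 != 0.
Hypothesis tan_theta_linear : forall s, I s -> tan (theta s) = a1 * s + a2.

Lemma kappa_cos2 s : I s -> kappa s = a1 * cos (theta s) ^+ 2.
Proof.
move=> Is.
have tan'E : cos (theta s) ^- 2 * kappa s = a1.
  apply: is_derive_eq_on I_open Is tan_theta_linear (is_derive_tan_theta Is) _.
  apply: is_derive_eq
    (is_deriveD (is_deriveZ a1 (is_derive_id s 1)) (is_derive_cst a2 s 1)) _.
  by rewrite -![_ *: _]/(_ * _) mulr1 addr0.
by rewrite -tan'E mulrAC mulVf ?mul1r // expf_neq0 // cos_theta_neq0.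
Qed.

Lemma is_derive_inv_a1_cos s : I s ->
  is_derive s 1 (fun t => (a1 * cos (theta t))^-1) (sin (theta s)).
Proof.
move=> Is; have c0 := cos_theta_neq0 Is.
have a1c0 : a1 * cos (theta s) != 0 by rewrite mulf_neq0.
have a1cos' := is_deriveZ a1 (is_derive_cos_theta Is).
apply: is_derive_eq
  (@is_deriveV R (a1 \*: (fun t => cos (theta t))) s _ 1 a1c0 a1cos') _.
rewrite -![_ *: _]/(_ * _) kappa_cos2 //.
have -> : (a1 \*: (fun t => cos (theta t))) s = a1 * cos (theta s) by [].
by field; rewrite c0 a1_neq0.
Qed.

Lemma beta_sub_T_cst x y : I x -> I y ->
  beta x - (a1 * cos (theta x))^-1 *: T x =
  beta y - (a1 * cos (theta y))^-1 *: T y.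
Proof.
move=> Ix Iy; apply/rowP => i; rewrite !mxE.
pose phi t := beta t 0 i - (a1 * cos (theta t))^-1 * T t 0 i.
apply: (is_derive0_cst_on (phi := phi) I_interval _ Ix Iy).
move=> t It; apply: is_derive_eq (is_deriveB
  (is_derive_coord 0 i (is_derive1 (beta_derivable It) erefl))
  (is_deriveM (is_derive_inv_a1_cos It) (is_derive_coord 0 i (T'_frenet It)))) _.
rewrite beta'_angle // !mxE -![_ *: _]/(_ * _) kappa_cos2 //.
by field; rewrite cos_theta_neq0 // a1_neq0.
Qed.

Lemma tan_linear_rectifying s0 : I s0 ->
  exists c, rectifying_on I (fun t => beta t + c).
Proof.
move=> Is0; set c := - (beta s0 - (a1 * cos (theta s0))^-1 *: T s0).
exists c => s Is; have [Tc [nu nu0 Bc]] := frenet_translate c Is.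
exists ((a1 * cos (theta s))^-1 * sin (theta s)),
       ((a1 * cos (theta s))^-1 * cos (theta s) / nu).
rewrite /= Tc Bc /c -(beta_sub_T_cst Is Is0) opprB subrKC beta'_angle //.
apply/rowP => i; rewrite !mxE.
rewrite -[LHS]mulr1 -(cos2Dsin2 (theta s)).
by field; rewrite nu0 cos_theta_neq0 // a1_neq0.
Qed.

End TanLinear.

Lemma rectifying_iff_tan_linear :
  (exists c, rectifying_on I (fun s => beta s + c)) <->
  (exists a1 a2 : R, a1 != 0 /\ forall s, I s -> tan (theta s) = a1 * s + a2).
Proof.
have [[s0 Is0]|I0] := pselect (exists s, I s); last first.
  split=> _; last by exists 0 => s Is; case: I0; exists s.
  by exists 1, 0; split=> [|s Is]; [exact: oner_neq0 | case: I0; exists s].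
split=> [[c rect]|[a1 [a2 [a1_neq0 tan_lin]]]].
- exact: rectifying_tan_linear rect s0 Is0.
- exact: tan_linear_rectifying a1_neq0 tan_lin s0 Is0.
Qed.

End OsculatingMate.

Theorem theorem7 (R : realType) (I : set R)
    (alpha T N B : R -> 'rV[R]_3) (kappa tau : R -> R)
    (beta : R -> 'rV[R]_3) (x1 x2 theta : R -> R) :
  (* I is an open interval *)
  open I -> is_interval I ->
  (* alpha is a unit speed Frenet curve with Frenet frame {T,N,B} *)
  (forall s, I s -> derivable alpha s 1 /\ derive1 alpha s = T s) ->
  (forall s, I s -> dotp (T s) (T s) = 1 /\ dotp (N s) (N s) = 1 /\
                    dotp (T s) (N s) = 0 /\ B s = crossp (T s) (N s)) ->
  (forall s, I s -> 0 < kappa s) ->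
  (forall s, I s -> {for s, continuous kappa} /\ {for s, continuous tau}) ->
  (forall s, I s ->
     derivable T s 1 /\ derivable N s 1 /\ derivable B s 1 /\
     derive1 T s = kappa s *: N s /\
     derive1 N s = - kappa s *: T s + tau s *: B s /\
     derive1 B s = - tau s *: N s) ->
  (* beta is an osculating mate of alpha *)
  (forall s, I s -> derivable x1 s 1 /\ derivable x2 s 1 /\
                    x1 s ^+ 2 + x2 s ^+ 2 = 1) ->
  (forall s, I s -> derivable beta s 1 /\
                    derive1 beta s = x1 s *: T s + x2 s *: N s) ->
  (forall s, I s -> derivable (derive1 beta) s 1 /\
                    dotp (derive1 (derive1 beta) s) (T s) = 0 /\
                    dotp (derive1 (derive1 beta) s) (N s) = 0) ->
  (* beta is a Frenet curve (positive curvature) *)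
  (forall s, I s -> derive1 (derive1 beta) s != 0) ->
  (* theta is an antiderivative of kappa with beta' = sin theta T + cos theta N *)
  (forall s, I s -> derivable theta s 1 /\ derive1 theta s = kappa s) ->
  (forall s, I s -> derive1 beta s = sin (theta s) *: T s + cos (theta s) *: N s) ->
  (exists c : 'rV[R]_3, rectifying_on I (fun s => beta s + c)) <->
  (exists a1 a2 : R, a1 != 0 /\ forall s, I s -> tan (theta s) = a1 * s + a2).
Proof.
move=> oI iI _ frame _ _ frenet _ dbeta ddbeta ddbeta_neq0 dtheta dbeta_angle.
have frame' s : I s -> [/\ dotp (T s) (T s) = 1, dotp (N s) (N s) = 1,
    dotp (T s) (N s) = 0 & B s = crossp (T s) (N s)].
  by move=> /frame[? [? [? ?]]]; split.
have T' s : I s -> is_derive s 1 T (kappa s *: N s).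
  by move=> /frenet[dT [_ [_ [eT _]]]]; exact: is_derive1 dT eT.
have N' s : I s -> is_derive s 1 N (- kappa s *: T s + tau s *: B s).
  by move=> /frenet[_ [dN [_ [_ [eN _]]]]]; exact: is_derive1 dN eN.
have B' s : I s -> is_derive s 1 B (- tau s *: N s).
  by move=> /frenet[_ [_ [dB [_ [_ eB]]]]]; exact: is_derive1 dB eB.
have theta' s : I s -> is_derive s 1 theta (kappa s).
  by move=> /dtheta[dth eth]; exact: is_derive1 dth eth.
exact: (rectifying_iff_tan_linear oI iI frame' T' N' B' theta'
  (fun s Is => (dbeta s Is).1) dbeta_angle (fun s Is => (ddbeta s Is).1)
  (fun s Is => (ddbeta s Is).2) ddbeta_neq0).
Qed.
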